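(* Let $G=(V,E)$ be a finite simple graph with diversity $D=D(G)$ and maximum clique size $S$, let $t>1$ be an integer, let $k=\lceil S/t\rceil$, and let $G'$ be a connector of $G$ with parameter $t$. Let $\varphi$ be any proper vertex coloring of $G'$, and for each color $i$ let $G_i$ be the subgraph of $G$ induced by the vertices with $\varphi$-color $i$. Then for every $i$, the maximum degree of $G_i$ is at most $(k-1)\cdot D$.
   Context: The diversity of a vertex $v$ of a graph $G$ is the number of maximal cliques of $G$ containing $v$ (a clique is maximal if no clique of $G$ strictly contains it); the diversity $D(G)$ is the maximum diversity over all vertices. Let $\mathcal Q$ be the set of all maximal cliques of $G$ and let $S(Q)$ denote the number of vertices of $Q$. A connector of $G$ with parameter $t$ is obtained as follows: each clique $Q\in\mathcal Q$ (independently of the other cliques) partitions its vertex set into $k(Q)=\lceil S(Q)/t\rceil$ parts $V_1(Q),\dots,V_{k(Q)}(Q)$, each of size at most $t$. The connector is $G'=(V,E')$ with $E'=\{(u,v)\in E : u,v\in V_i(Q)\text{ for some }Q\in\mathcal Q\text{ and some }i\}$. *)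

From mathcomp Require Import all_boot.
Set Implicit Arguments. Unset Strict Implicit. Unset Printing Implicit Defensive.

(* A finite simple graph: vertex type T : finType, adjacency e : rel T,
   assumed symmetric and irreflexive in the theorem. *)

Definition is_clique (T : finType) (e : rel T) (Q : {set T}) : bool :=
  [forall x in Q, forall y in Q, (x != y) ==> e x y].

Definition is_maxclique (T : finType) (e : rel T) (Q : {set T}) : bool :=
  is_clique e Q && [forall R : {set T}, (Q \proper R) ==> ~~ is_clique e R].

Definition vdiversity (T : finType) (e : rel T) (v : T) : nat :=
  #|[set Q : {set T} | is_maxclique e Q & v \in Q]|.

Definition diversity (T : finType) (e : rel T) : nat :=
  \max_(v : T) vdiversity e v.

Definition max_clique_size (T : finType) (e : rel T) : nat :=
  \max_(Q : {set T} | is_clique e Q) #|Q|.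

Definition ceil_div (a b : nat) : nat := (a + b.-1) %/ b.

(* p Q : T -> nat assigns to each vertex of a maximal clique Q the index
   (0 .. k(Q)-1) of its part V_{i+1}(Q). *)
Definition connector_partition (T : finType) (e : rel T) (t : nat)
  (p : {set T} -> T -> nat) : Prop :=
  forall Q : {set T}, is_maxclique e Q ->
    (forall x, x \in Q -> p Q x < ceil_div #|Q| t) /\
    (forall i, i < ceil_div #|Q| t ->
       0 < #|[set x in Q | p Q x == i]| <= t).

Definition connector_rel (T : finType) (e : rel T) (p : {set T} -> T -> nat) : rel T :=
  fun u v => e u v &&
    [exists Q : {set T}, [&& is_maxclique e Q, u \in Q, v \in Q & p Q u == p Q v]].

Definition proper_coloring (T : finType) (r : rel T) (phi : T -> nat) : Prop :=
  forall u v, r u v -> phi u != phi v.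

Definition class_degree (T : finType) (e : rel T) (phi : T -> nat) (i : nat) (v : T) : nat :=
  #|[set u | e v u & phi u == i]|.

From mathcomp Require Import all_boot.

(* Every colour-[i] neighbour u of v lies, together with v, in some maximal
   clique Q through v.  Inside Q, two distinct vertices of the same part are
   joined in the connector, so a colour class meets each part of Q at most
   once; the part of v is already taken by v itself.  Hence each of the at
   most D maximal cliques through v contributes at most k(Q) - 1 <= k - 1
   neighbours of colour i. *)

Section Cliques.

Context {T : finType} {e : rel T}.

Lemma clique_sub_maxclique (A : {set T}) :
  is_clique e A -> exists2 Q, is_maxclique e Q & A \subset Q.
Proof.
move=> cA.
pose P R := is_clique e R && (A \subset R).
have PA : P A by rewrite /P cA subxx.
case: (arg_maxnP (fun R : {set T} => #|R|) PA) => R /andP[cR sAR] maxR.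
exists R => //; rewrite /is_maxclique cR /=.
apply/forallP => R'; apply/implyP => ltRR'; apply/negP => cR'.
have sAR' : A \subset R' := subset_trans sAR (proper_sub ltRR').
have := maxR R'; rewrite /P cR' sAR' => /(_ isT).
by apply/negP; rewrite -ltnNge; exact: proper_card ltRR'.
Qed.

Lemma clique_pair {u w : T} : symmetric e -> e u w -> is_clique e [set u; w].
Proof.
move=> e_sym euw; apply/forallP => x; apply/implyP => /set2P[]->;
  apply/forallP => y; apply/implyP => /set2P[]->;
  by rewrite ?eqxx // ?(e_sym w) euw implybT.
Qed.

Lemma edge_in_maxclique {u w : T} : symmetric e -> e u w ->
  exists2 Q, is_maxclique e Q & (u \in Q) && (w \in Q).
Proof.
move=> e_sym /(clique_pair e_sym)/clique_sub_maxclique[Q mQ /subsetP sQ].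
by exists Q; rewrite // !sQ ?set21 ?set22.
Qed.

Lemma clique_card_le (Q : {set T}) : is_clique e Q -> #|Q| <= max_clique_size e.
Proof. exact: (@leq_bigmax_cond _ (is_clique e) (fun R : {set T} => #|R|)). Qed.

Lemma maxclique_card_le (Q : {set T}) :
  is_maxclique e Q -> #|Q| <= max_clique_size e.
Proof. by case/andP => /clique_card_le. Qed.

End Cliques.

Lemma leq_ceil_div (a b t : nat) : a <= b -> ceil_div a t <= ceil_div b t.
Proof. by move=> leab; rewrite leq_div2r // leq_add2r. Qed.

Lemma leq_card_bigcup {T I : finType} (P : pred I) (F : I -> {set T}) :
  #|\bigcup_(i | P i) F i| <= \sum_(i | P i) #|F i|.
Proof.
apply: (big_ind2 (fun (X : {set T}) n => #|X| <= n)) => //; first by rewrite cards0.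
by move=> X m Y n leXm leYn; apply: leq_trans (leq_card_setU X Y) (leq_add leXm leYn).
Qed.

Section Connector.

Context {T : finType} {e : rel T} {t : nat} {p : {set T} -> T -> nat}.
Hypothesis hp : connector_partition e t p.
Context {phi : T -> nat}.
Hypothesis hphi : proper_coloring (connector_rel e p) phi.

Lemma colour_inj_on_maxclique (Q : {set T}) (c : nat) :
  is_maxclique e Q -> {in [set u in Q | phi u == c] &, injective (p Q)}.
Proof.
move=> mQ u w /setIdP[uQ /eqP phiu] /setIdP[wQ /eqP phiw] puw.
apply/eqP; apply: contraT => neq_uw.
have euw : e u w.
  by case/andP: mQ => /forall_inP/(_ u uQ)/forall_inP/(_ w wQ)/implyP/(_ neq_uw).
have : connector_rel e p u w.
  by rewrite /connector_rel euw; apply/existsP; exists Q; rewrite mQ uQ wQ puw eqxx.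
by move/hphi; rewrite phiu phiw eqxx.
Qed.

Lemma card_colour_maxclique (Q : {set T}) (c : nat) :
  is_maxclique e Q -> #|[set u in Q | phi u == c]| <= ceil_div #|Q| t.
Proof.
move=> mQ; set A := [set u in Q | phi u == c].
have [p_lt _] := hp _ mQ.
rewrite cardE -(size_map (p Q)) -(size_iota 0 (ceil_div #|Q| t)).
apply: uniq_leq_size.
  rewrite map_inj_in_uniq ?enum_uniq // => u w; rewrite !mem_enum.
  exact: colour_inj_on_maxclique.
move=> x /mapP[u]; rewrite mem_enum => /setIdP[uQ _] ->.
by rewrite mem_iota p_lt.
Qed.

Lemma card_colour_nbhd_maxclique {v : T} {Q : {set T}} :
  irreflexive e -> is_maxclique e Q -> v \in Q ->
  #|[set u | e v u & phi u == phi v] :&: Q| <= (ceil_div #|Q| t).-1.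
Proof.
move=> e_irr mQ vQ; set A := [set u in Q | phi u == phi v].
have vA : v \in A by rewrite inE vQ eqxx.
have sNA : [set u | e v u & phi u == phi v] :&: Q \subset A :\ v.
  apply/subsetP => u /setIP[/setIdP[evu phiu] uQ].
  by rewrite !inE uQ phiu !andbT; apply: contraTneq evu => ->; rewrite e_irr.
apply: leq_trans (subset_leq_card sNA) _.
have := card_colour_maxclique _ (phi v) mQ.
by rewrite -/A (cardsD1 v A) vA add1n => /(leq_sub2r 1); rewrite !subn1.
Qed.

End Connector.

Theorem mainTheorem2 (T : finType) (e : rel T)
  (e_sym : symmetric e) (e_irr : irreflexive e)
  (t : nat) (ht : 1 < t)
  (p : {set T} -> T -> nat) (hp : connector_partition e t p)
  (phi : T -> nat) (hphi : proper_coloring (connector_rel e p) phi) :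
  forall (i : nat) (v : T), phi v = i ->
    class_degree e phi i v <=
      (ceil_div (max_clique_size e) t).-1 * diversity e.
Proof.
move=> i v <-; rewrite /class_degree.
set N := [set u | e v u & phi u == phi v].
set C := [set Q : {set T} | is_maxclique e Q & v \in Q].
have N_cover : N \subset \bigcup_(Q in C) (N :&: Q).
  apply/subsetP => u uN; move: (uN); rewrite inE => /andP[evu _].
  have [Q mQ /andP[vQ uQ]] := edge_in_maxclique e_sym evu.
  apply/bigcupP; exists Q; first by rewrite inE mQ vQ.
  by rewrite in_setI uN uQ.
have part_bound Q : Q \in C -> #|N :&: Q| <= (ceil_div (max_clique_size e) t).-1.
  case/setIdP => mQ vQ.
  apply: leq_trans (card_colour_nbhd_maxclique hp hphi e_irr mQ vQ) _.
  by rewrite -!subn1 leq_sub2r // leq_ceil_div // maxclique_card_le.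
apply: leq_trans (subset_leq_card N_cover) _.
apply: leq_trans (leq_card_bigcup _ _) _.
rewrite (leq_trans (leq_sum _ part_bound)) // sum_nat_const mulnC leq_mul2l.
by rewrite (leq_bigmax (F := vdiversity e) v) orbT.
Qed.
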